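(* Let $m$ be a positive integer and let $a_1,\dots,a_m$ be distinct nonnegative integers; set $a_0=a_m$ and $a_{m+1}=a_1$. Let $\alpha=|\{i\in\{1,\dots,m\}: a_{i-1}<a_i>a_{i+1}\}|$. Then (i) $\sum_{i=1}^m\max\{a_i,a_{i+1}\}\ge\sum_{i=1}^m a_i+\max\{a_1,\dots,a_m\}-\min\{a_1,\dots,a_m\}+(\alpha-1)$; (ii) $\sum_{i=0}^{m-1}|a_i-a_{i+1}|\ge 2(m-1)+2(\alpha-1)\ge 2(m-1)$. *)

From mathcomp Require Import all_boot all_order all_algebra.
Set Implicit Arguments. Unset Strict Implicit. Unset Printing Implicit Defensive.
Import Order.TTheory GRing.Theory Num.Theory.

(* The sequence a_1,...,a_m is given as a : nat -> nat, only the values at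
   indices 1..m matter.  [cyc a m i] is the cyclically extended sequence:
   a_0 := a_m, a_{m+1} := a_1, a_i otherwise. *)
Definition cyc (a : nat -> nat) (m i : nat) : nat :=
  if i == 0 then a m else if i == m.+1 then a 1 else a i.

Definition npeaks (a : nat -> nat) (m : nat) : nat :=
  count (fun i => (cyc a m i.-1 < cyc a m i) && (cyc a m i.+1 < cyc a m i))
        (iota 1 m).

Definition amax (a : nat -> nat) (m : nat) : nat := \max_(1 <= i < m.+1) a i.
Definition amin (a : nat -> nat) (m : nat) : nat :=
  \big[minn/a 1]_(1 <= i < m.+1) a i.

From mathcomp Require Import all_boot all_order all_algebra zify.
Import Order.TTheory GRing.Theory Num.Theory.
Set Implicit Arguments. Unset Strict Implicit. Unset Printing Implicit Defensive.

(* Extend a_1, ..., a_m to an m-periodic walk f.  Its rise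
   sum_k (f (k+1) - f k)_+ over one period counts the pairs (k, t) with
   f k <= t < f (k+1), i.e. it is the sum over all levels t of the number of
   upcrossings of t.  Every level t with min <= t < max is upcrossed, and the
   level just below a peak other than the maximum is upcrossed twice: on the
   way up to the peak, and between its right neighbour and the next maximum.
   Peak values being distinct, rise >= max - min + (alpha - 1).  As the walk
   is closed, its rise equals its fall; hence sum_i max(a_i, a_(i+1)) =
   sum_i a_i + rise and the total variation is twice the rise.  Finally
   max - min >= m - 1 for distinct integers, and the maximum is a peak once
   m >= 2. *)

Lemma sum_indicator_itv x y M :
  \sum_(0 <= t < M) ((x <= t) && (t < y)) = minn y M - minn x M.
Proof.
elim: M => [|M IH]; first by rewrite big_nil !minn0.
by rewrite big_nat_recr //= IH; case: (leqP x M); case: (ltnP M y) => /=; lia.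
Qed.

Lemma leq_sum_nat_subrange (F : nat -> nat) lo a b hi :
  lo <= a -> b <= hi -> \sum_(a <= k < b) F k <= \sum_(lo <= k < hi) F k.
Proof.
move=> lo_a b_hi; case: (leqP a b) => [a_b|b_a]; last by rewrite big_geq // ltnW.
rewrite (big_cat_nat lo_a (leq_trans a_b b_hi)) (big_cat_nat a_b b_hi) /=.
by rewrite addnCA leq_addr.
Qed.

Lemma sum_periodic_window (F : nat -> nat) m s :
  (forall k, F (k + m) = F k) -> \sum_(s <= k < s + m) F k = \sum_(0 <= k < m) F k.
Proof.
move=> F_per; elim: s => // s IH.
apply/(@addnI (F s)); rewrite -big_ltn ?leq_addr // -IH addSn big_nat_recr ?leq_addr //=.
by rewrite addnC F_per.
Qed.

Lemma count_sumE (T : Type) (P : pred T) (s : seq T) : count P s = \sum_(i <- s) P i.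
Proof. by rewrite -sum1_count big_mkcond. Qed.

Lemma eq_mod_window m lo i j :
  lo <= i < lo + m -> lo <= j < lo + m -> i = j %[mod m] -> i = j.
Proof.
wlog le_ij : i j / i <= j => [hwlog|hi hj].
  by case: (leqP i j) => [|/ltnW] le hi hj eij; [|symmetry]; apply: hwlog.
rewrite -(subnKC le_ij) -{1}[i]addn0 => /eqP; rewrite eqn_modDl mod0n.
by rewrite modn_small; lia.
Qed.

Lemma mem_big_selective (op : nat -> nat -> nat) x0 (F : nat -> nat) s :
  (forall x y, op x y = x \/ op x y = y) ->
  \big[op/x0]_(i <- s) F i \in x0 :: map F s.
Proof.
move=> op_sel; rewrite big_seq; elim/big_ind: _ => [|x y|i si]; first exact: mem_head.
  by case: (op_sel x y) => ->.
by rewrite inE map_f ?orbT.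
Qed.

Section Upcrossings.
Variable f : nat -> nat.

Definition upcross (t k : nat) : bool := (f k <= t) && (t < f k.+1).

Lemma sum_rise_upcross lo hi M : (forall k, f k <= M) ->
  \sum_(lo <= k < hi) (f k.+1 - f k) =
  \sum_(0 <= t < M) \sum_(lo <= k < hi) upcross t k.
Proof.
move=> f_le; rewrite exchange_big; apply: eq_bigr => k _.
by rewrite sum_indicator_itv !(minn_idPl (f_le _)).
Qed.

Lemma sum_upcross_gt0 lo j l hi t : lo <= j <= l -> l <= hi -> f j <= t < f l ->
  0 < \sum_(lo <= k < hi) upcross t k.
Proof.
move=> /andP[lo_j j_l] l_hi /andP[fj_t t_fl].
apply: leq_trans _ (leq_sum_nat_subrange _ lo_j l_hi).
elim: l j_l t_fl {l_hi} => [|l IH]; first by rewrite leqn0 => /eqP j0; rewrite j0 in fj_t; lia.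
rewrite leq_eqVlt ltnS => /orP[/eqP <-|j_l] t_fl; first lia.
rewrite big_nat_recr //=; case: (ltnP t (f l)) => [/(IH j_l)|fl_t]; first lia.
by rewrite /upcross fl_t t_fl addn1.
Qed.

End Upcrossings.

Section PeriodicWalk.
Variables (f : nat -> nat) (m : nat).
Hypothesis f_periodic : forall k, f (k + m) = f k.
Hypothesis f_inj_mod : forall i j, f i = f j -> i = j %[mod m].

Definition peak i := (f i.-1 < f i) && (f i.+1 < f i).
Definition rise := \sum_(0 <= k < m) (f k.+1 - f k).
Definition upcrossings t := \sum_(0 <= k < m) upcross f t k.

Lemma peak_periodic i : 0 < i -> peak (i + m) = peak i.
Proof. by case: i => // i _; rewrite /peak addSn /= -!addSn !f_periodic. Qed.

Lemma eq_in_window lo i j :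
  lo <= i < lo + m -> lo <= j < lo + m -> f i = f j -> i = j.
Proof. by move=> hi hj /f_inj_mod; apply: eq_mod_window hi hj. Qed.

Lemma upcrossings_window j t :
  \sum_(j <= k < j + m) upcross f t k = upcrossings t.
Proof. by apply: sum_periodic_window => k; rewrite /upcross -addSn !f_periodic. Qed.

Lemma fall_eq_rise : \sum_(0 <= k < m) (f k - f k.+1) = rise.
Proof.
have shift : \sum_(0 <= k < m) f k.+1 = \sum_(0 <= k < m) f k.
  by rewrite -(sum_periodic_window 1 f_periodic) big_add1.
apply/(@addnI (\sum_(0 <= k < m) f k)); rewrite -{1}shift -!big_split /=.
by apply: eq_bigr => k _; rewrite -!maxnE maxnC.
Qed.

Lemma upcrossings_gt0 i j t : j <= i <= j + m -> f i <= t < f j ->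
  0 < upcrossings t.
Proof.
move=> ji t_bet; rewrite -(upcrossings_window j).
by apply: (sum_upcross_gt0 (j := i) (l := j + m)); rewrite ?f_periodic.
Qed.

Lemma upcrossings_gt1 j p : j < p < j + m -> peak p -> f p < f j ->
  1 < upcrossings (f p).-1.
Proof.
move=> /andP[j_p p_jm] /andP[lt_prev lt_next] fp_fj.
rewrite -(upcrossings_window j) (big_cat_nat (ltnW j_p) (ltnW p_jm)) /=.
have below : 0 < \sum_(j <= k < p) upcross f (f p).-1 k.
  by apply: (sum_upcross_gt0 (j := p.-1) (l := p)); lia.
have above : 0 < \sum_(p <= k < j + m) upcross f (f p).-1 k.
  by apply: (sum_upcross_gt0 (j := p.+1) (l := j + m)); rewrite ?f_periodic; lia.
lia.
Qed.

Lemma count_same_value_le1 (P : pred nat) :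
  (forall i j, P i -> P j -> f i = f j) -> count P (iota 1 m) <= 1.
Proof.
move=> same; rewrite -size_filter.
have := filter_uniq P (iota_uniq 1 m); have mem := mem_filter P ^~ (iota 1 m).
case: (filter P (iota 1 m)) mem => [|i [|j s]] //= mem.
rewrite !inE negb_or => /andP[/andP[/eqP ij _] _]; case: ij.
have /andP[Pi iw] : P i && (i \in iota 1 m) by rewrite -mem mem_head.
have /andP[Pj jw] : P j && (j \in iota 1 m) by rewrite -mem !inE eqxx orbT.
by move: iw jw; rewrite !mem_iota => iw jw; apply: eq_in_window iw jw (same _ _ Pi Pj).
Qed.

Variables (M mn : nat).
Hypotheses (f_le_max : forall k, f k <= M) (f_ge_min : forall k, mn <= f k).

Lemma size_le_range : m <= M - mn + 1.
Proof.
have uniq_vals : uniq (map f (iota 1 m)).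
  by rewrite map_inj_in_uniq ?iota_uniq // => i j; rewrite !mem_iota; apply: eq_in_window.
have := uniq_leq_size uniq_vals (s2 := iota mn (M - mn + 1)).
rewrite size_map !size_iota; apply=> _ /mapP[i _ ->]; rewrite mem_iota.
by have := f_le_max i; have := f_ge_min i; lia.
Qed.

Definition low_peak i := peak i && (f i < M).
Definition low_peaks_at t := count (fun i => low_peak i && ((f i).-1 == t)) (iota 1 m).

Lemma count_peak_le : count peak (iota 1 m) <= count low_peak (iota 1 m) + 1.
Proof.
have max_once : count (fun i => f i == M) (iota 1 m) <= 1.
  by apply: count_same_value_le1 => i j /eqP-> /eqP->.
apply: (@leq_trans (count (predU low_peak (fun i => f i == M)) (iota 1 m))).
  apply: sub_count => i /= pk; rewrite /low_peak pk ltn_neqAle f_le_max andbT /=.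
  by case: eqP.
by have := count_predUI low_peak (fun i => f i == M) (iota 1 m); lia.
Qed.

Variable iM : nat.
Hypotheses (f_iM : f iM = M) (iM_window : 0 < iM <= m).

Lemma peak_argmax : 1 < m -> peak iM.
Proof.
move=> m_gt1; rewrite /peak f_iM !ltn_neqAle !f_le_max !andbT -f_iM.
apply/andP; split; apply/eqP.
  by move/(eq_in_window (lo := iM.-1)); lia.
by move/(eq_in_window (lo := iM)); lia.
Qed.

Lemma upcrossings_gt1_low_peak i : 0 < i <= m -> low_peak i ->
  1 < upcrossings (f i).-1.
Proof.
move=> iw /andP[pk]; rewrite -f_iM => fi_M.
have ne : i != iM by apply: contraTneq fi_M => ->; rewrite ltnn.
case: (ltnP iM i) => [lt|le].
  by apply: (upcrossings_gt1 (j := iM)) => //; lia.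
rewrite -f_periodic; apply: (upcrossings_gt1 (j := iM)); rewrite ?peak_periodic ?f_periodic //; lia.
Qed.

Variable imn : nat.
Hypotheses (f_imn : f imn = mn) (imn_window : 0 < imn <= m).

Lemma upcrossings_gt0_min_max t : mn <= t < M -> 0 < upcrossings t.
Proof.
rewrite -f_imn -f_iM => t_bet; case: (leqP iM imn) => [le|lt].
  by apply: (upcrossings_gt0 (i := imn) (j := iM)) => //; lia.
by apply: (upcrossings_gt0 (i := imn + m) (j := iM)); rewrite ?f_periodic //; lia.
Qed.

Lemma upcrossings_ge t : t < M -> (mn <= t < M) + low_peaks_at t <= upcrossings t.
Proof.
move=> tM; rewrite tM andbT.
have le1 : low_peaks_at t <= 1.
  apply: count_same_value_le1 => i j.
  by move=> /andP[/andP[/andP[pi _] _] /eqP ei] /andP[/andP[/andP[pj _] _] /eqP ej]; lia.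
case: (posnP (low_peaks_at t)) => [->|].
  by rewrite addn0; case: (leqP mn t) => // mn_t; apply: upcrossings_gt0_min_max; lia.
move=> pos; have /hasP[i] : has (fun i => low_peak i && ((f i).-1 == t)) (iota 1 m).
  by rewrite has_count.
rewrite mem_iota => iw /andP[lp /eqP ti].
have := upcrossings_gt1_low_peak iw lp; rewrite ti.
have := leq_b1 (mn <= t); lia.
Qed.

Lemma rise_ge : M - mn + count low_peak (iota 1 m) <= rise.
Proof.
have sum_min : \sum_(0 <= t < M) ((mn <= t) && (t < M)) = M - mn.
  by rewrite sum_indicator_itv minnn (minn_idPl _) // -f_iM.
have sum_low : \sum_(0 <= t < M) low_peaks_at t = count low_peak (iota 1 m).
  under eq_bigr do rewrite /low_peaks_at count_sumE.
  rewrite exchange_big count_sumE; apply: eq_bigr => i _.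
  case: (boolP (low_peak i)) => [lp|_] /=; last by rewrite big1.
  rewrite -count_sumE (eq_count (a2 := pred1 (f i).-1)) => [|t]; last exact: eq_sym.
  move: lp => /andP[_ fi_M].
  by rewrite count_uniq_mem ?iota_uniq // mem_iota add0n subn0 (leq_ltn_trans (leq_pred _) fi_M).
rewrite /rise (sum_rise_upcross 0 m f_le_max) -sum_min -sum_low -big_split /=.
rewrite big_seq [leqRHS]big_seq.
by apply: leq_sum => t; rewrite mem_index_iota => /andP[_ tM]; apply: upcrossings_ge.
Qed.

Lemma rise_bound : M - mn + count peak (iota 1 m) <= rise + 1.
Proof. by have := rise_ge; have := count_peak_le; lia. Qed.

End PeriodicWalk.

Definition cyc_ext (a : nat -> nat) (m k : nat) : nat := a ((k + m.-1) %% m).+1.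

Section CyclicSequence.
Variables (a : nat -> nat) (m : nat).
Hypothesis m_gt0 : 0 < m.
Hypothesis a_inj : forall i j, 1 <= i <= m -> 1 <= j <= m -> a i = a j -> i = j.
Local Notation f := (cyc_ext a m).

Lemma cyc_ext_periodic k : f (k + m) = f k.
Proof. by rewrite /cyc_ext addnAC modnDr. Qed.

Lemma cyc_ext_index k : 1 <= ((k + m.-1) %% m).+1 <= m.
Proof. by rewrite ltn_mod. Qed.

Lemma cyc_cyc_ext k : k <= m.+1 -> cyc a m k = f k.
Proof.
rewrite /cyc /cyc_ext; case: k => [_|k k_le] /=.
  by rewrite add0n modn_small ?prednK //; lia.
rewrite addSn -addnS prednK // modnDr; case: eqP => [[->]|ne]; first by rewrite modnn.
by rewrite modn_small //; lia.
Qed.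

Lemma cyc_ext_window i : 1 <= i <= m -> f i = a i.
Proof.
move=> iw; rewrite -cyc_cyc_ext; last lia.
by rewrite /cyc !ifN //; lia.
Qed.

Lemma cyc_ext_inj_mod i j : f i = f j -> i = j %[mod m].
Proof.
move=> /(a_inj (cyc_ext_index i) (cyc_ext_index j)) [] /eqP.
by rewrite eqn_modDr => /eqP.
Qed.

Lemma cyc_ext_le_amax k : f k <= amax a m.
Proof. by apply: leq_bigmax_seq; rewrite ?mem_index_iota ?cyc_ext_index. Qed.

Lemma amin_le_cyc_ext k : amin a m <= f k.
Proof.
rewrite /amin -minEnat; apply: (@ge_bigmin_seq _ nat nat _ (a 1) _ xpredT) => //.
by rewrite mem_index_iota cyc_ext_index.
Qed.

Lemma amax_attained : exists2 i, 0 < i <= m & f i = amax a m.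
Proof.
have sel x y : maxn x y = x \/ maxn x y = y by lia.
have : amax a m \in 0 :: map a (index_iota 1 m.+1) := mem_big_selective _ _ _ sel.
rewrite inE => /orP[/eqP max0|/mapP[i]].
  by exists 1 => //; have := cyc_ext_le_amax 1; rewrite max0; lia.
by rewrite mem_index_iota => iw ->; exists i; rewrite ?cyc_ext_window.
Qed.

Lemma amin_attained : exists2 i, 0 < i <= m & f i = amin a m.
Proof.
have sel x y : minn x y = x \/ minn x y = y by lia.
have : amin a m \in a 1 :: map a (index_iota 1 m.+1) := mem_big_selective _ _ _ sel.
rewrite inE => /orP[/eqP->|/mapP[i]]; first by exists 1; rewrite ?cyc_ext_window.
by rewrite mem_index_iota => iw ->; exists i; rewrite ?cyc_ext_window.
Qed.

Lemma npeaks_cyc_ext : npeaks a m = count (peak f) (iota 1 m).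
Proof.
by apply: eq_in_count => i; rewrite mem_iota => iw; rewrite /peak !cyc_cyc_ext //; lia.
Qed.

Lemma npeaks_rise_bound : amax a m - amin a m + npeaks a m <= rise f m + 1.
Proof.
have [iM iMw fM] := amax_attained; have [imn imnw fmn] := amin_attained.
rewrite npeaks_cyc_ext.
exact: (rise_bound cyc_ext_periodic cyc_ext_inj_mod cyc_ext_le_amax amin_le_cyc_ext fM iMw fmn imnw).
Qed.

Lemma size_le_amax_sub_amin : m <= amax a m - amin a m + 1.
Proof. exact: (size_le_range cyc_ext_inj_mod cyc_ext_le_amax amin_le_cyc_ext). Qed.

Lemma npeaks_gt0 : 1 < m -> 0 < npeaks a m.
Proof.
move=> m_gt1; have [iM iMw fM] := amax_attained.
rewrite npeaks_cyc_ext -has_count; apply/hasP; exists iM; first by rewrite mem_iota; lia.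
exact: (peak_argmax cyc_ext_inj_mod cyc_ext_le_amax fM iMw).
Qed.

Lemma sum_maxn_cyc :
  \sum_(1 <= i < m.+1) maxn (cyc a m i) (cyc a m i.+1) = \sum_(1 <= i < m.+1) a i + rise f m.
Proof.
rewrite /rise -(sum_periodic_window 1 (F := fun k => f k.+1 - f k)); last first.
  by move=> k; rewrite -addSn !cyc_ext_periodic.
rewrite add1n -big_split /=; apply: eq_big_nat => i iw.
by rewrite maxnE !cyc_cyc_ext ?(cyc_ext_window (i := i)) //; lia.
Qed.

Lemma sum_dist_cyc :
  \sum_(0 <= i < m) ((cyc a m i - cyc a m i.+1) + (cyc a m i.+1 - cyc a m i)) = 2 * rise f m.
Proof.
rewrite (eq_big_nat _ _ (F2 := fun i => (f i - f i.+1) + (f i.+1 - f i))) => [|i iw].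
  by rewrite big_split /= fall_eq_rise ?mul2n ?addnn //; apply: cyc_ext_periodic.
by rewrite !cyc_cyc_ext //; lia.
Qed.

End CyclicSequence.

Unset Implicit Arguments.
Local Open Scope ring_scope.

Lemma sumz_nat (F : nat -> nat) lo hi :
  \sum_(lo <= i < hi) (F i)%:Z = (\sum_(lo <= i < hi) F i)%N%:Z.
Proof. by rewrite (big_morph Posz PoszD (erefl 0%:Z)). Qed.

Theorem lemma5p1 (m : nat) (a : nat -> nat) (hm : (0 < m)%N)
  (hdist : forall i j, (1 <= i <= m)%N -> (1 <= j <= m)%N -> a i = a j -> i = j) :
  (* (i) *)
  ((\sum_(1 <= i < m.+1) (maxn (cyc a m i) (cyc a m i.+1))%:Z : int)
     >= (\sum_(1 <= i < m.+1) (a i)%:Z) + (amax a m)%:Z - (amin a m)%:Z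
        + ((npeaks a m)%:Z - 1))
  /\
  (* (ii) *)
  ((\sum_(0 <= i < m) `|(cyc a m i)%:Z - (cyc a m i.+1)%:Z| : int)
     >= 2 * (m%:Z - 1) + 2 * ((npeaks a m)%:Z - 1)
   /\ (\sum_(0 <= i < m) `|(cyc a m i)%:Z - (cyc a m i.+1)%:Z| : int)
     >= 2 * (m%:Z - 1)
   /\ ((1 < m)%N -> 2 * (m%:Z - 1) + 2 * ((npeaks a m)%:Z - 1) >= 2 * (m%:Z - 1))).
Proof.
have bound := npeaks_rise_bound hm hdist.
have range := size_le_amax_sub_amin hm hdist.
have peaks := npeaks_gt0 hm hdist.
have dist : \sum_(0 <= i < m) `|(cyc a m i)%:Z - (cyc a m i.+1)%:Z| =
    (2 * rise (cyc_ext a m) m)%N%:Z.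
  by rewrite -sum_dist_cyc // -sumz_nat; apply: eq_bigr => i _; lia.
rewrite dist !sumz_nat (sum_maxn_cyc a hm).
lia.
Qed.
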